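(* Let $\mathcal{H}$ be a complex Hilbert space of finite dimension $n\ge 2$, $m\ge 2$, and $\rho$ a density operator on $\mathcal{H}^{\otimes m}$ in reduced state consensus (RSC) such that each reduced state $\bar\rho_k$ is a pure state (rank one). Then $\rho$ is in symmetric state consensus (SSC).
   Context: The reduced states are $\bar\rho_k=\mathrm{Tr}_{\bigotimes_{j\neq k}\mathcal{H}_j}(\rho)$ (partial trace over all tensor factors except the $k$-th). $\rho$ is RSC if $\bar\rho_1=\cdots=\bar\rho_m$. For a permutation $\pi$ of $\{1,\dots,m\}$, $U_\pi$ is the unitary on $\mathcal{H}^{\otimes m}$ with $U_\pi(X_1\otimes\cdots\otimes X_m)U_\pi^\dagger=X_{\pi(1)}\otimes\cdots\otimes X_{\pi(m)}$; $\rho$ is SSC if $U_\pi\rho U_\pi^\dagger=\rho$ for all permutations $\pi$. *)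

From HB Require Import structures.
From mathcomp Require Import all_boot all_order all_algebra all_fingroup.
Set Implicit Arguments. Unset Strict Implicit. Unset Printing Implicit Defensive.
Import Order.TTheory GRing.Theory Num.Theory.
Local Open Scope ring_scope.

(* Scalars: an arbitrary numeric algebraically closed field C (e.g. the
   complex numbers), with conjugation  z^*.  H = C^n with standard basis
   indexed by 'I_n; H^{(x) m} has the product basis indexed by
   m-tuples  x : {ffun 'I_m -> 'I_n}  (e_x = e_{x 0} (x) ... (x) e_{x (m-1)}).
   Operators on H^{(x) m} are given by their matrices in this basis. *)

Definition idx (n m : nat) : finType := {ffun 'I_m -> 'I_n}.
Definition op (C : numClosedFieldType) (n m : nat) := idx n m -> idx n m -> C.

Section Ops.
Variables (C : numClosedFieldType) (n m : nat).
Local Notation K := (idx n m).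

Definition opmul (A B : op C n m) : op C n m :=
  fun x y => \sum_(z : K) A x z * B z y.

Definition adjoint (A : op C n m) : op C n m := fun x y => (A y x)^*.

Definition optrace (A : op C n m) : C := \sum_(x : K) A x x.

Definition density (rho : op C n m) : Prop :=
  [/\ forall x y, rho y x = (rho x y)^*,
      forall v : K -> C, 0 <= \sum_(x : K) \sum_(y : K) (v x)^* * rho x y * v y
    & optrace rho = 1].

Definition upd (x : K) (k : 'I_m) (b : 'I_n) : K :=
  [ffun j => if j == k then b else x j].

(* reduced state: partial trace over all factors except the k-th *)
Definition reduced (rho : op C n m) (k : 'I_m) : 'M[C]_n :=
  \matrix_(a, b) \sum_(x : K | x k == a) rho x (upd x k b).

Definition RSC (rho : op C n m) : Prop :=
  forall k l : 'I_m, reduced rho k = reduced rho l.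

(* U_pi: U_pi e_y = e_{y o pi}, i.e. U_pi (v_1 (x) ... (x) v_m)
   = v_{pi 1} (x) ... (x) v_{pi m}; hence
   U_pi (X_1 (x) ... (x) X_m) U_pi^dagger = X_{pi 1} (x) ... (x) X_{pi m}. *)
Definition Uperm (pi : {perm 'I_m}) : op C n m :=
  fun x y => (x == [ffun j => y (pi j)])%:R.

Definition SSC (rho : op C n m) : Prop :=
  forall pi : {perm 'I_m},
    opmul (opmul (Uperm pi) rho) (adjoint (Uperm pi)) = rho.

End Ops.

From mathcomp Require Import all_boot all_order all_algebra all_fingroup.
From mathcomp Require Import ring.
From Stdlib Require Import FunctionalExtensionality.
Set Implicit Arguments. Unset Strict Implicit. Unset Printing Implicit Defensive.
Import Order.TTheory GRing.Theory Num.Theory.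
Local Open Scope ring_scope.

(* The common reduced state is a rank-one matrix M = u v^T with v^T u = 1.
   For w in the kernel of M, the number w^* M w = 0 is the sum, over all lines
   in direction k, of the nonnegative values of the quadratic form of rho at
   w placed on the line; so each of them vanishes and rho kills each placed
   copy of w.  Taking w = e_b - u v_b shows that rho absorbs the projector
   u v^T on factor k of its column index.  Doing this on every factor gives
   rho x y = f(x) * prod_i v(y_i), and Hermiticity then forces
   rho x y = d * conj(prod_i v(x_i)) * prod_i v(y_i): a product state, hence
   invariant under every permutation of the factors. *)

Section Indicator.
Variables (T : finType) (R : pzSemiRingType).

Lemma sum_eq_natl (F : T -> R) t : \sum_s (s == t)%:R * F s = F t.
Proof.
rewrite (bigD1 t) //= eqxx mul1r big1 ?addr0 // => s /negbTE ->.
by rewrite mul0r.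
Qed.

Lemma sum_eq_natr (F : T -> R) t : \sum_s F s * (s == t)%:R = F t.
Proof.
rewrite (bigD1 t) //= eqxx mulr1 big1 ?addr0 // => s /negbTE ->.
by rewrite mulr0.
Qed.

End Indicator.

Lemma rank1_factor (F : fieldType) p q (A : 'M[F]_(p, q)) :
  \rank A = 1%N ->
  exists (u : 'I_p -> F) (v : 'I_q -> F), forall a b, A a b = u a * v b.
Proof.
move=> rA; have := mulmx_base A; move: (col_base A) (row_base A).
rewrite rA => c r cr.
by exists (fun a => c a 0), (fun b => r 0 b) => a b; rewrite -cr mxE big_ord1.
Qed.

Section Coordinates.
Variables (n m : nat).
Local Notation K := (idx n m).

Lemma updE (x : K) k b j : upd x k b j = if j == k then b else x j.
Proof. by rewrite ffunE. Qed.

Lemma upd_same (x : K) k b : upd x k b k = b.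
Proof. by rewrite updE eqxx. Qed.

Lemma upd_upd (x : K) k a b : upd (upd x k a) k b = upd x k b.
Proof. by apply/ffunP=> j; rewrite !updE; case: (j == k). Qed.

Lemma upd_id (x : K) k b : x k = b -> upd x k b = x.
Proof. by move=> <-; apply/ffunP=> j; rewrite updE; case: eqP => // ->. Qed.

Variable R : nmodType.

Lemma partition_coord (F : K -> R) k :
  \sum_x F x = \sum_a \sum_(x : K | x k == a) F x.
Proof. exact: partition_big. Qed.

Lemma reindex_coord (F : K -> R) k a b :
  \sum_(x : K | x k == a) F x = \sum_(x : K | x k == b) F (upd x k a).
Proof.
rewrite (reindex_onto (fun x => upd x k a) (fun x => upd x k b)).
  apply: eq_bigl => x; rewrite upd_same eqxx /= upd_upd.
  by apply/eqP/eqP => [<-|/upd_id //]; rewrite upd_same.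
by move=> x /eqP <-; rewrite upd_upd upd_id.
Qed.

(* The points [z] with [upd z k (y k) == y] form the line through [y] in
   direction [k]. *)
Lemma sum_line (G : K -> R) k (y : K) :
  \sum_z (if upd z k (y k) == y then G z else 0) = \sum_a G (upd y k a).
Proof.
rewrite (partition_coord _ k); apply: eq_bigr => a _.
rewrite (reindex_coord _ _ _ (y k)) (bigD1 y) //= upd_upd upd_id // eqxx.
rewrite big1 ?addr0 // => x /andP [/eqP xk /negbTE].
by rewrite upd_upd upd_id // => ->.
Qed.

Lemma sum_over_lines (G : K -> R) k b (P : pred K) :
  \sum_(z : K | P z && (z k == b)) \sum_a G (upd z k a)
  = \sum_(z : K | P (upd z k b)) G z.
Proof.
rewrite exchange_big /= [RHS]big_mkcond [RHS](partition_coord _ k).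
apply: eq_bigr => a _.
rewrite (reindex_coord _ _ _ b) big_mkcond [RHS]big_mkcond.
apply: eq_bigr => x _ /=; rewrite upd_upd.
case: (x k =P b) => [xk|]; last by rewrite andbF.
by rewrite andbT (upd_id xk).
Qed.

End Coordinates.

Section PositiveKernel.
Variables (C : numClosedFieldType) (n m : nat) (A : op C n m).
Local Notation K := (idx n m).

Definition qform (v : K -> C) : C :=
  \sum_(x : K) \sum_(y : K) (v x)^* * A x y * v y.

Hypothesis A_herm : forall x y, A y x = (A x y)^*.

Lemma qform_add_delta (v : K -> C) (t : C) x0 :
  qform (fun x => v x + t * (x == x0)%:R) =
  qform v + t * (\sum_y A x0 y * v y)^* + t^* * (\sum_y A x0 y * v y)
  + t^* * t * A x0 x0.
Proof.
have expand x y :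
  (v x + t * (x == x0)%:R)^* * A x y * (v y + t * (y == x0)%:R)
  = (v x)^* * A x y * v y + (y == x0)%:R * ((v x)^* * A x y * t)
    + (x == x0)%:R * (t^* * (A x y * v y))
    + (x == x0)%:R * ((y == x0)%:R * (t^* * A x y * t)).
  by rewrite rmorphD rmorphM rmorph_nat; ring.
rewrite /qform; under eq_bigr do under eq_bigr do rewrite expand.
under eq_bigr do rewrite !big_split /= sum_eq_natl.
rewrite !big_split /=; congr (_ + _ + _ + _).
- rewrite rmorph_sum mulr_sumr; apply: eq_bigr => x _.
  by rewrite rmorphM (A_herm x0 x); ring.
- by under eq_bigr do rewrite -mulr_sumr; rewrite sum_eq_natl -mulr_sumr.
- under eq_bigr do rewrite -mulr_sumr sum_eq_natl.
  by rewrite sum_eq_natl; ring.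
Qed.

Hypothesis A_psd : forall v : K -> C, 0 <= qform v.

Lemma psd_diag_ge0 x0 : 0 <= A x0 x0.
Proof.
have := A_psd (fun x => (x == x0)%:R); rewrite /qform.
under eq_bigr do under eq_bigr do rewrite conjC_nat.
by under eq_bigr do rewrite sum_eq_natr; rewrite sum_eq_natl.
Qed.

Lemma psd_qform_eq0 (v : K -> C) :
  qform v = 0 -> forall x0, \sum_y A x0 y * v y = 0.
Proof.
move=> qv0 x0; set a := \sum_y A x0 y * v y; set b := A x0 x0.
have b_ge0 : 0 <= b := psd_diag_ge0 x0.
have b1_gt0 : 0 < b + 1 by rewrite ltr_wpDl.
(* Positivity at [v - a/(b+1) e_x0] gives [- |a|^2 (b+2)/(b+1)^2 >= 0]. *)
pose s := (b + 1)^-1.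
have s_gt0 : 0 < s by rewrite invr_gt0.
have s_real : s^* = s by rewrite geC0_conj // ltW.
have := A_psd (fun x => v x + (- (a * s)) * (x == x0)%:R).
rewrite qform_add_delta qv0 -/a.
have -> : 0 + - (a * s) * a^* + (- (a * s))^* * a
            + (- (a * s))^* * - (a * s) * b
          = - (s * s * (a * a^*) * (b + 2)).
  by rewrite rmorphN rmorphM /= s_real /s; field; rewrite gt_eqF.
rewrite oppr_ge0 => le0.
have ge0 : 0 <= s * s * (a * a^*) * (b + 2).
  have s_ge0 := ltW s_gt0.
  by rewrite mulr_ge0 ?addr_ge0 // mulr_ge0 ?mul_conjC_ge0 // mulr_ge0.
have b2_gt0 : 0 < b + 2 by rewrite ltr_wpDl.
have /eqP : s * s * (a * a^*) * (b + 2) = 0 by apply/le_anti; rewrite le0 ge0.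
rewrite !mulf_eq0 (gt_eqF s_gt0) (gt_eqF b2_gt0) conjC_eq0 /=.
by rewrite orbF orbb => /eqP.
Qed.

End PositiveKernel.

Section Slices.
Variables (C : numClosedFieldType) (n m : nat) (rho : op C n m).
Local Notation K := (idx n m).
Hypothesis rho_herm : forall x y, rho y x = (rho x y)^*.
Hypothesis rho_psd : forall v : K -> C, 0 <= qform rho v.
Variables (k : 'I_m) (w : 'I_n -> C).

Definition slice (y z : K) : C := if upd z k (y k) == y then w (z k) else 0.

Lemma qform_slice y :
  qform rho (slice y)
  = \sum_a \sum_b (w a)^* * rho (upd y k a) (upd y k b) * w b.
Proof.
rewrite /qform /slice (eq_bigr (fun x => if upd x k (y k) == y then
    \sum_z (if upd z k (y k) == y then (w (x k))^* * rho x z * w (z k) else 0)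
  else 0)); last first.
  move=> x _; case: ifP => _.
    by apply: eq_bigr => z _; case: ifP; rewrite ?mulr0.
  by rewrite big1 // => z _; rewrite rmorph0 !mul0r.
rewrite sum_line; apply: eq_bigr => a _.
by rewrite sum_line upd_same; apply: eq_bigr => b _; rewrite upd_same.
Qed.

Lemma sum_qform_slice c :
  \sum_(y : K | y k == c) qform rho (slice y)
  = \sum_a (w a)^* * \sum_b reduced rho k a b * w b.
Proof.
under eq_bigr do rewrite qform_slice.
rewrite exchange_big; apply: eq_bigr => a _ /=.
rewrite exchange_big mulr_sumr; apply: eq_bigr => b _ /=.
rewrite mxE (reindex_coord _ _ a c) !mulr_suml mulr_sumr; apply: eq_bigr => y _.
by rewrite !upd_upd mulrA.
Qed.

Hypothesis w_ker : forall a, \sum_b reduced rho k a b * w b = 0.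

Lemma slice_kernel y x : \sum_a rho x (upd y k a) * w a = 0.
Proof.
have qform_slice0 : qform rho (slice y) = 0.
  have sum0 : \sum_(z : K | z k == y k) qform rho (slice z) = 0.
    by rewrite sum_qform_slice big1 // => a _; rewrite w_ker mulr0.
  by apply: (psumr_eq0P _ sum0) => // z _.
have := psd_qform_eq0 rho_herm rho_psd qform_slice0 x.
rewrite /slice (eq_bigr (fun z =>
    if upd z k (y k) == y then rho x z * w (z k) else 0)).
  by rewrite sum_line; under eq_bigr do rewrite upd_same.
by move=> z _; case: ifP; rewrite ?mulr0.
Qed.

End Slices.

Section ProductForm.
Variables (C : numClosedFieldType) (n m : nat) (rho : op C n m).
Local Notation K := (idx n m).
Hypothesis rho_herm : forall x y, rho y x = (rho x y)^*.
Hypothesis rho_psd : forall v : K -> C, 0 <= qform rho v.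
Hypothesis rho_tr : optrace rho = 1.
Variables (u v : 'I_n -> C).
Hypothesis reducedE : forall k a b, reduced rho k a b = u a * v b.

Lemma sum_vu (k : 'I_m) : \sum_a v a * u a = 1.
Proof.
rewrite -rho_tr /optrace (partition_coord _ k); apply: eq_bigr => a _.
by rewrite mulrC -(reducedE k) mxE; apply: eq_bigr => x /eqP <-; rewrite upd_id.
Qed.

Lemma absorb_coord k x y : rho x y = \sum_a rho x (upd y k a) * u a * v (y k).
Proof.
pose w c : C := (c == y k)%:R - u c * v (y k).
have w_ker a : \sum_c reduced rho k a c * w c = 0.
  under eq_bigr do rewrite reducedE mulrBr.
  rewrite sumrB sum_eq_natr (eq_bigr (fun c => u a * (v c * u c) * v (y k))).
    by rewrite -mulr_suml -mulr_sumr (sum_vu k) mulr1 subrr.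
  by move=> c _; ring.
have := slice_kernel rho_herm rho_psd w_ker y x.
under eq_bigr do rewrite mulrBr.
rewrite sumrB sum_eq_natr upd_id // => /eqP; rewrite subr_eq0 => /eqP ->.
by apply: eq_bigr => a _; rewrite mulrA.
Qed.

Definition agree_from (j : nat) (y z : K) :=
  [forall i : 'I_m, (j <= i)%N ==> (z i == y i)].

Definition weight (j : nat) (y z : K) :=
  \prod_(i : 'I_m | (i < j)%N) (u (z i) * v (y i)).

Lemma agree_from0 y z : agree_from 0 y z = (z == y).
Proof.
apply/forallP/eqP => [agree|-> i]; last by rewrite eqxx implybT.
by apply/ffunP => i; apply/eqP; exact: (implyP (agree i)).
Qed.

Lemma agree_fromS (k : 'I_m) y z :
  agree_from k y z = agree_from k.+1 y z && (z k == y k).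
Proof.
apply/forallP/andP => [agree|[/forallP agree1 zk] i].
  split; last exact: (implyP (agree k)) (leqnn k).
  by apply/forallP => i; apply/implyP => /ltnW; exact: (implyP (agree i)).
apply/implyP; rewrite leq_eqVlt => /orP [/eqP ki|]; last exact/implyP/agree1.
by rewrite (_ : i = k) //; apply: val_inj.
Qed.

Lemma agree_fromS_upd (k : 'I_m) y z :
  agree_from k.+1 y (upd z k (y k)) = agree_from k.+1 y z.
Proof.
by apply: eq_forallb => i; rewrite updE; case: (i =P k) => [->|]; rewrite ?ltnn.
Qed.

Lemma weightS (k : 'I_m) y z a :
  weight k.+1 y (upd z k a) = u a * v (y k) * weight k y z.
Proof.
rewrite /weight (bigD1 k) ?ltnSn //= upd_same; congr (_ * _).
apply: eq_big => [i|i /andP [_ /negbTE ik]]; last by rewrite updE ik.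
by rewrite ltnS ltn_neqAle andbC.
Qed.

Lemma absorb_prefix j x y :
  (j <= m)%N ->
  rho x y = \sum_(z : K | agree_from j y z) rho x z * weight j y z.
Proof.
elim: j => [_|j IH lt_jm].
  rewrite (big_pred1 y) => [|z]; last by rewrite agree_from0.
  by rewrite /weight big_pred0 ?mulr1.
pose k := Ordinal lt_jm.
rewrite (IH (ltnW lt_jm)) (eq_bigl _ _ (agree_fromS k y)).
rewrite [RHS](eq_bigl (fun z => agree_from k.+1 y (upd z k (y k)))); last first.
  by move=> z; rewrite agree_fromS_upd.
rewrite -sum_over_lines; apply: eq_bigr => z /andP [_ /eqP zk].
rewrite (absorb_coord k x z) zk mulr_suml; apply: eq_bigr => a _.
by rewrite (weightS k); ring.
Qed.

Lemma rho_prod_v x y :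
  rho x y = (\sum_(z : K) rho x z * \prod_i u (z i)) * \prod_i v (y i).
Proof.
rewrite (absorb_prefix x y (leqnn m)) mulr_suml.
have agree_all z : agree_from m y z = true.
  by apply/forallP => i; apply/implyP; rewrite leqNgt ltn_ord.
rewrite (eq_bigl _ _ agree_all); apply: eq_bigr => z _.
by rewrite /weight (eq_bigl _ _ (fun i : 'I_m => ltn_ord i)) big_split mulrA.
Qed.

Lemma rho_product_state :
  exists d, forall x y, rho x y = d * (\prod_i v (x i))^* * \prod_i v (y i).
Proof.
exists (\sum_(z : K)
  (\sum_(w : K) rho z w * \prod_i u (w i))^* * \prod_i u (z i)).
move=> x y; rewrite rho_prod_v; congr (_ * _).
rewrite mulrC mulr_sumr; apply: eq_bigr => z _.
by rewrite (rho_herm z x) rho_prod_v rmorphM; ring.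
Qed.

End ProductForm.

Lemma prod_ffun_perm (R : comPzSemiRingType) n m (pi : {perm 'I_m})
    (f : 'I_n -> R) (x : idx n m) :
  \prod_i f ([ffun j => x (pi j)] i) = \prod_i f (x i).
Proof.
rewrite [RHS](reindex_inj (@perm_inj _ pi)).
by apply: eq_bigr => i _; rewrite ffunE.
Qed.

Lemma Uperm_conjE (C : numClosedFieldType) n m (pi : {perm 'I_m})
    (A : op C n m) x y :
  opmul (opmul (Uperm C pi) A) (adjoint (Uperm C pi)) x y
  = A [ffun j => x ((pi^-1)%g j)] [ffun j => y ((pi^-1)%g j)].
Proof.
have Uperm_inv (x' w : idx n m) :
    (x' == [ffun j => w (pi j)]) = (w == [ffun j => x' ((pi^-1)%g j)]).
  by apply/eqP/eqP => ->; apply/ffunP => j; rewrite !ffunE ?permKV ?permK.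
rewrite /opmul /adjoint /Uperm.
under eq_bigr do under eq_bigr do rewrite Uperm_inv.
under eq_bigr do rewrite sum_eq_natl Uperm_inv conjC_nat mulrC.
by rewrite sum_eq_natl.
Qed.

Theorem proposition3 (C : numClosedFieldType) (n m : nat)
  (hn : (2 <= n)%N) (hm : (2 <= m)%N) (rho : op C n m) :
  density rho -> RSC rho ->
  (forall k : 'I_m, \rank (reduced rho k) = 1%N) ->
  SSC rho.
Proof.
move=> [rho_herm rho_psd rho_tr] rsc rank1 pi.
pose k0 : 'I_m := Ordinal (ltnW hm).
have [u [v uvE]] := rank1_factor (rank1 k0).
have reducedE k a b : reduced rho k a b = u a * v b by rewrite (rsc k k0) uvE.
have [d rhoE] := rho_product_state rho_herm rho_psd rho_tr reducedE.
apply: functional_extensionality => x; apply: functional_extensionality => y.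
by rewrite Uperm_conjE !rhoE !prod_ffun_perm.
Qed.
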